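(* Let $\mathcal P$ be a finite set of points in an arbitrary metric space, and let $G=(\mathcal P,E)$ be an undirected network in which every agent is greedy connected and whose number of edges is minimum among all such networks on $\mathcal P$ (a social optimum network). Then there is an assignment of each edge of $E$ to exactly one of its endpoints as owner such that the resulting strategy profile of the undirected greedy routing network creation game is a $2$-approximate Nash equilibrium.
   Context: Undirected variant of the game: $\mathcal P$ is a finite set of points (agents) with metric $d$; each agent $u$ chooses a strategy $S_u\subseteq\{\{u,v\}:v\in\mathcal P\setminus\{u\}\}$ of undirected edges, which it owns; a profile $\mathbf s$ induces the network $G(\mathbf s)$ on $\mathcal P$ in which $\{u,v\}$ is an edge iff $\{u,v\}\in S_u\cup S_v$. A greedy routing path from $u$ to $w$ is a path $(x_1=u,\dots,x_j=w)$ in the network with $d(x_i,w)>d(x_{i+1},w)$ for all $i$; $u$ is greedy connected if it has a greedy routing path to every other agent. The cost of $u$ is $c_u(\mathbf s)=|S_u|$ if $u$ is greedy connected and $\infty$ otherwise. A profile $\mathbf s$ is a $\beta$-approximate Nash equilibrium if no agent $u$ can, by unilaterally changing its strategy, obtain cost strictly less than $\frac1\beta c_u(\mathbf s)$. *)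

From mathcomp Require Import all_boot all_order all_algebra.
From mathcomp Require Import boolp.
Set Implicit Arguments. Unset Strict Implicit. Unset Printing Implicit Defensive.
Import Order.TTheory GRing.Theory Num.Theory.
Local Open Scope ring_scope.

Section Game.
Variables (R : realFieldType) (T : finType) (d : T -> T -> R).

Definition is_metric : Prop :=
  (forall x y, 0 <= d x y) /\ (forall x y, d x y = 0 <-> x = y) /\
  (forall x y, d x y = d y x) /\ (forall x y z, d x z <= d x y + d y z).

Definition is_network (E : {set {set T}}) : Prop :=
  forall e, e \in E -> #|e| = 2%N.

Definition adj (E : {set {set T}}) (x y : T) : bool := [set x; y] \in E.

Definition greedy_path (E : {set {set T}}) (u w : T) (p : seq T) : bool :=
  path (fun x y => adj E x y && (d y w < d x w)) u p && (last u p == w).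

Definition greedy_connected (E : {set {set T}}) (u : T) : Prop :=
  forall w, w != u -> exists p : seq T, greedy_path E u w p.

Definition all_greedy_connected (E : {set {set T}}) : Prop :=
  forall u, greedy_connected E u.

Definition social_optimum (E : {set {set T}}) : Prop :=
  is_network E /\ all_greedy_connected E /\
  forall E', is_network E' -> all_greedy_connected E' -> (#|E| <= #|E'|)%N.

Definition valid_strategy (u : T) (S : {set {set T}}) : Prop :=
  forall e, e \in S -> u \in e /\ #|e| = 2%N.

Definition profile := T -> {set {set T}}.

Definition valid_profile (s : profile) : Prop := forall u, valid_strategy u (s u).

Definition net (s : profile) : {set {set T}} := \bigcup_(u : T) s u.

(* cost: Some |S_u| if u greedy connected, None = infinity *)
Definition cost (s : profile) (u : T) : option nat :=
  if asbool (greedy_connected (net s) u) then Some #|s u| else None.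

Definition upd (s : profile) (u : T) (S : {set {set T}}) : profile :=
  fun v => if v == u then S else s v.

Definition improves (beta : R) (c' c : option nat) : Prop :=
  match c, c' with
  | None, Some _ => True
  | None, None => False
  | Some _, None => False
  | Some cb, Some ca => (ca%:R : R) < (cb%:R : R) / beta
  end.

Definition approx_NE (beta : R) (s : profile) : Prop :=
  forall u S, valid_strategy u S -> ~ improves beta (cost (upd s u S) u) (cost s u).

End Game.

From mathcomp Require Import all_boot all_order all_algebra.
From mathcomp Require Import zify boolp.
Set Implicit Arguments. Unset Strict Implicit. Unset Printing Implicit Defensive.
Import Order.TTheory GRing.Theory Num.Theory.

(* Greedy connectivity of all agents is a local property: it holds iff every u
   has, for each target w, a neighbour strictly closer to w than u.  Hence if every vertex x of an edge set Z inside the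
   social optimum E could trade its Z-edges for fewer than half as many new edges,
   then E minus Z plus all these new stars would still be greedy connected, and
   since the degrees in Z sum to 2|Z| it would have fewer edges than E.  So some
   vertex x can own all its Z-edges stably, i.e. no such trade halves its cost;
   letting x own them and recursing on the remaining edges assigns every edge of
   E to an endpoint with every agent stable.  A deviating agent keeps the edges
   owned by others, so stability rules out every deviation halving its cost. *)

Section GreedyRouting.
Variables (R : realFieldType) (T : finType) (d : T -> T -> R).
Implicit Types (E G S W Z : {set {set T}}) (A B V : {set T}) (x y z w : T).

Definition nbr G x : {set T} := [set y | [set x; y] \in G].

Definition edges_at Z x : {set {set T}} := [set e in Z | x \in e].

Definition degree Z x : nat := #|edges_at Z x|.

Definition greedy_nbhd x A : bool :=
  [forall w, (w != x) ==> [exists z in A, (d z w < d x w)%R]].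

Lemma greedy_nbhdP x A :
  reflect (forall w, w != x -> exists2 z, z \in A & (d z w < d x w)%R)
          (greedy_nbhd x A).
Proof.
apply: (iffP forallP) => [H w wx | H w]; last first.
  by apply/implyP => /H [z zA lt]; apply/exists_inP; exists z.
by have /implyP/(_ wx)/exists_inP[z] := H w; exists z.
Qed.

Lemma greedy_nbhdS x A B : A :\ x \subset B -> greedy_nbhd x A -> greedy_nbhd x B.
Proof.
move=> /subsetP AB /greedy_nbhdP H; apply/greedy_nbhdP => w /H [z zA lt].
exists z => //; apply: AB; rewrite !inE zA andbT.
by apply: contraTneq lt => ->; rewrite ltxx.
Qed.

Lemma greedy_connected_nbhd G u :
  greedy_connected d G u -> greedy_nbhd u (nbr G u).
Proof.
move=> H; apply/greedy_nbhdP => w wu; have [[|z p]] := H w wu.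
  by rewrite /greedy_path /= eq_sym (negbTE wu).
by case/andP=> /andP[/andP[uz lt] _] _; exists z; rewrite ?inE.
Qed.

(* Induction on the number of points closer to the target than the current one. *)
Lemma nbhd_all_greedy_connected G :
  (forall x, greedy_nbhd x (nbr G x)) -> all_greedy_connected d G.
Proof.
move=> H u w; move: {2}#|_| (leqnn #|[set z | (d z w < d u w)%R]|) => n.
elim: n u => [|n IH] x closer wx; have /greedy_nbhdP/(_ w wx)[z zN lt] := H x.
  have : z \in [set z | (d z w < d x w)%R] by rewrite inE.
  by move: closer; rewrite leqn0 => /eqP/cards0_eq ->; rewrite inE.
have xz : adj G x z by rewrite inE in zN.
have [wz|wz] := eqVneq w z.
  by subst w; exists [:: z]; rewrite /greedy_path /= eqxx xz lt.
have [|p zp] := IH z _ wz.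
  rewrite -ltnS (leq_trans _ closer) // proper_card //; apply/properP; split.
    by apply/subsetP => y; rewrite !inE => /lt_trans; apply.
  by exists z; rewrite !inE ?ltxx.
by exists (z :: p); move: zp; rewrite /greedy_path /= xz lt.
Qed.

Lemma card_nbr S x : is_network S -> (#|nbr S x| <= #|S|)%N.
Proof.
move=> netS; rewrite -(@card_in_imset _ _ (fun y => [set x; y])).
  by apply: subset_leq_card; apply/subsetP => e /imsetP[y]; rewrite inE => yS ->.
move=> y y' yS _ /setP/(_ y); rewrite !inE eqxx orbT => /esym/orP[/eqP yx|/eqP //].
by move: yS; rewrite inE yx setUid => /netS; rewrite cards1.
Qed.

Lemma handshake Z : is_network Z -> \sum_x degree Z x = (2 * #|Z|)%N.
Proof.
move=> netZ; have deg x : degree Z x = \sum_(e in Z) (x \in e : nat).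
  rewrite /degree -sum1_card big_mkcond [RHS]big_mkcond; apply: eq_bigr => e _.
  by rewrite inE; case: (e \in Z); case: (x \in e).
under eq_bigr do rewrite deg.
rewrite exchange_big /= mulnC -sum_nat_const.
apply: eq_bigr => e eZ; rewrite -(netZ e eZ) -sum1_card [RHS]big_mkcond /=.
by apply: eq_bigr => x _; case: (x \in e).
Qed.

Lemma social_optimum_exchange E Z (V : T -> {set T}) :
  social_optimum d E -> Z \subset E ->
  (forall x, greedy_nbhd x (nbr (E :\: Z) x :|: V x)) -> (#|Z| <= \sum_x #|V x|)%N.
Proof.
case=> netE [_ minE] ZE greedyV.
pose stars := \bigcup_x [set [set x; y] | y in V x :\ x].
have net' : is_network ((E :\: Z) :|: stars).
  move=> e; rewrite inE => /orP[/setDP[/netE //]|/bigcupP[x _ /imsetP[y]]].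
  by rewrite !inE => /andP[yx _] ->; rewrite cards2 eq_sym yx.
have greedy' : all_greedy_connected d ((E :\: Z) :|: stars).
  apply: nbhd_all_greedy_connected => x; apply: greedy_nbhdS (greedyV x).
  apply/subsetP => y; rewrite !inE => /andP[yx /orP[->|yV]] //.
  apply/orP; right; apply/bigcupP; exists x => //.
  by apply/imsetP; exists y; rewrite // !inE yx.
have card_stars : (#|stars| <= \sum_x #|V x|)%N.
  rewrite /stars; elim/big_rec2: _ => [|x n U _ leUn]; first by rewrite cards0.
  apply: leq_trans (leq_card_setU _ _).1 (leq_add _ leUn).
  exact: leq_trans (leq_imset_card _ _) (subset_leq_card (subD1set _ _)).
have := leq_trans (minE _ net' greedy') (leq_card_setU _ _).1.
rewrite -(cardsID Z E) (setIidPr ZE) addnC leq_add2l => /leq_trans; apply.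
exact: card_stars.
Qed.

Definition stable_owner E x W : bool :=
  [forall V, greedy_nbhd x (nbr (E :\: W) x :|: V) ==> (#|W| <= 2 * #|V|)%N].

Lemma nbr_setD_edges_at E Z x : nbr (E :\: edges_at Z x) x = nbr (E :\: Z) x.
Proof. by apply/setP => y; rewrite !inE eqxx andbT. Qed.

Lemma exists_stable_owner E Z :
  social_optimum d E -> Z \subset E -> Z != set0 ->
  exists2 x, edges_at Z x != set0 & stable_owner E x (edges_at Z x).
Proof.
move=> SO ZE /set0Pn[e eZ]; have [netE [greedyE _]] := SO.
have netZ : is_network Z by move=> f /(subsetP ZE)/netE.
set P := [exists x, (edges_at Z x != set0) && stable_owner E x (edges_at Z x)].
have [/existsP[x /andP[]]|/existsPn unstable] := boolP P; first by exists x.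
have /fin_all_exists2[V greedyV cheapV] x : exists2 V,
    greedy_nbhd x (nbr (E :\: Z) x :|: V) &
    (2 * #|V| + (0 < degree Z x) <= degree Z x)%N.
  rewrite /degree card_gt0.
  have [Zx0|Zx] := eqVneq (edges_at Z x) set0.
    exists set0; rewrite ?cards0 // setU0 -(nbr_setD_edges_at E Z x) Zx0 setD0.
    exact: greedy_connected_nbhd (greedyE x).
  move: (unstable x); rewrite Zx => /forallPn[V].
  rewrite negb_imply -ltnNge nbr_setD_edges_at => /andP[greedy lt].
  by exists V; rewrite //= addn1.
have [a ae] : exists a, a \in e.
  by apply/set0Pn; rewrite -card_gt0 (netZ e eZ).
have some_deg_pos : (0 < \sum_x (0 < degree Z x))%N.
  have Za : (0 < degree Z a)%N by apply/card_gt0P; exists e; rewrite inE eZ ae.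
  by rewrite (bigD1 a) //= Za.
have : (\sum_x (2 * #|V x| + (0 < degree Z x)) <= \sum_x degree Z x)%N.
  by apply: leq_sum => x _; apply: cheapV.
rewrite big_split /= -big_distrr /= handshake //.
have := social_optimum_exchange SO ZE greedyV.
move: some_deg_pos; lia.
Qed.

Definition owned_by (owner : {set T} -> option T) Z x : {set {set T}} :=
  [set e in Z | owner e == Some x].

(* An option type, as T may be empty and then has no default owner. *)
Definition ownership (owner : {set T} -> option T) Z : Prop :=
  forall e, e \in Z -> exists2 x, owner e = Some x & x \in e.

Lemma net_owned_by owner Z : ownership owner Z -> net (owned_by owner Z) = Z.
Proof.
move=> own; apply/setP => e; apply/bigcupP/idP => [[x _]|eZ].
  by rewrite inE => /andP[].
by have [x ex _] := own e eZ; exists x; rewrite // inE eZ ex eqxx.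
Qed.

Lemma owned_by_disjoint owner Z u v :
  u != v -> [disjoint owned_by owner Z u & owned_by owner Z v].
Proof.
move=> uv; rewrite disjoint_subset; apply/subsetP => e; rewrite !inE.
by case/andP=> _ /eqP ->; apply/negP => /andP[_ /eqP[vu]]; rewrite vu eqxx in uv.
Qed.

Lemma owned_by_valid owner Z :
  is_network Z -> ownership owner Z -> valid_profile (owned_by owner Z).
Proof.
move=> netZ own u e; rewrite inE => /andP[eZ /eqP eu]; split; last exact: netZ.
by have [x ex xe] := own e eZ; move: ex; rewrite eu => -[->].
Qed.

Lemma exists_stable_ownership E Z :
  social_optimum d E -> Z \subset E ->
  exists2 owner, ownership owner Z &
                 forall x, stable_owner E x (owned_by owner Z x).
Proof.
move=> SO; elim: {Z}_.+1 {-2}Z (ltnSn #|Z|) => // n IH Z ltZn ZE.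
have [->|Zn0] := eqVneq Z set0.
  exists (fun _ => None) => [e|x]; first by rewrite inE.
  apply/forallP => V; apply/implyP => _.
  by rewrite (_ : owned_by _ _ _ = set0) ?cards0 //; apply/setP => e; rewrite !inE.
have [x Zx stable_x] := exists_stable_owner SO ZE Zn0.
pose Z' := [set e in Z | x \notin e].
have Z'Z : Z' \subset Z by apply/subsetP => e; rewrite inE => /andP[].
have ltZ'n : (#|Z'| < n)%N.
  rewrite -ltnS (leq_trans _ ltZn) // ltnS proper_card //; apply/properP; split => //.
  have [e] := set0Pn _ Zx; rewrite inE => /andP[eZ xe].
  by exists e; rewrite // inE xe andbF.
have [owner' owner'_in stable'] := IH Z' ltZ'n (subset_trans Z'Z ZE).
exists (fun e : {set T} => if x \in e then Some x else owner' e) => [e eZ|y].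
  case: ifPn => [xe|xe]; first by exists x.
  by apply: owner'_in; rewrite inE eZ xe.
have [->|yx] := eqVneq y x.
  congr (stable_owner _ _ _): stable_x; apply/setP => e; rewrite !inE.
  case: ifPn => [xe|xe]; first by rewrite eqxx.
  rewrite andbF; apply/esym/negbTE/andP => -[eZ].
  have /owner'_in[z -> ze] : e \in Z' by rewrite inE eZ xe.
  by move=> /eqP[zx]; rewrite -zx ze in xe.
congr (stable_owner _ _ _): (stable' y); apply/setP => e; rewrite !inE.
case: ifPn => xe; rewrite ?andbF ?andbT //.
by rewrite (inj_eq Some_inj) [x == y]eq_sym (negbTE yx) andbF.
Qed.

Lemma stable_profile_approx_NE (s : profile T) :
  all_greedy_connected d (net s) ->
  (forall u v, u != v -> [disjoint s u & s v]) ->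
  (forall u, stable_owner (net s) u (s u)) -> approx_NE d 2 s.
Proof.
move=> greedy disj stable u S validS.
rewrite /cost (asboolT (greedy u)) /upd eqxx.
case: asboolP => [/greedy_connected_nbhd greedyS|_ []] /=.
have nbr_dev : nbr (net (upd s u S)) u \subset nbr (net s :\: s u) u :|: nbr S u.
  apply/subsetP => y; rewrite !inE => /bigcupP[v _]; rewrite /upd.
  case: eqVneq => [_ ->|vu e_sv]; first by rewrite orbT.
  rewrite (disjointFr (disj v u vu) e_sv) /=.
  by apply/orP; left; apply/bigcupP; exists v.
have owned_le : (#|s u| <= 2 * #|nbr S u|)%N.
  apply: (implyP (forallP (stable u) _)); apply: greedy_nbhdS greedyS.
  exact: subset_trans (subD1set _ _) nbr_dev.
have bought_le := @card_nbr S u (fun e eS => (validS e eS).2).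
rewrite ltr_pdivlMr // -natrM ltr_nat mulnC; apply/negP; rewrite -leqNgt.
by rewrite (leq_trans owned_le) // leq_mul2l bought_le orbT.
Qed.

End GreedyRouting.

Theorem mainTheorem16 (R : realFieldType) (T : finType) (d : T -> T -> R)
  (E : {set {set T}}) :
  is_metric d -> social_optimum d E ->
  exists s : profile T,
    valid_profile s /\ net s = E /\
    (forall u v, u != v -> [disjoint s u & s v]) /\
    approx_NE d 2 s.
Proof.
move=> _ SO; have [netE [greedyE _]] := SO.
have [owner own stable] := exists_stable_ownership SO (subxx E).
have net_s := net_owned_by own.
have disj := @owned_by_disjoint T owner E.
exists (owned_by owner E); split; first exact: owned_by_valid netE own.
split=> //; split=> //.
by apply: stable_profile_approx_NE; rewrite ?net_s.
Qed.
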